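(* Let $n\ge3$. Let $\mathbf{b}_0=10^{n-1}\in\{0,1\}^n$ and, for $1\le i\le\lceil n/2\rceil-1$, let $\mathbf{b}_i\in\{0,1\}^n$ have ones exactly in coordinates $2i$ and $2i+1$. Let $V_{\mathcal{B}}=\mathrm{span}_{\mathbb{F}_2}\{\mathbf{b}_0,\ldots,\mathbf{b}_{\lceil n/2\rceil-1}\}$. For $\mathbf{a}=(a_0,a_1,\ldots,a_{\lceil n/2\rceil-1})\in\{0,1\}^{\lceil n/2\rceil}$ and $\mathbf{s}=\sum_{i=0}^{\lceil n/2\rceil-1}a_i\mathbf{b}_i$ (sum over $\mathbb{F}_2^n$), \[ \widehat{\mathds{1}_{S_2}}(\mathbf{s})=2^{\lfloor n/2\rfloor-n}\cdot(-1)^{w(\mathbf{a})-a_0}. \] Moreover, $\widehat{\mathds{1}_{S_2}}(\mathbf{s})=0$ for all $\mathbf{s}\notin V_{\mathcal{B}}$.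
   Context: Fourier transform: $\widehat{f}(\mathbf{s})=2^{-n}\sum_{\mathbf{x}\in\{0,1\}^n}f(\mathbf{x})(-1)^{\mathbf{x}\cdot\mathbf{s}}$. $w(\cdot)$ is Hamming weight. $S_2\subseteq\{0,1\}^n$ (the 2-charge constraint) is the set of $\mathbf{x}\in\{0,1\}^n$ such that, with $y_i=(-1)^{x_i}$, every running sum satisfies $0\le\sum_{i=1}^r y_i\le 2$ for $1\le r\le n$. *)

From HB Require Import structures.
From mathcomp Require Import all_boot all_order all_algebra.
Set Implicit Arguments. Unset Strict Implicit. Unset Printing Implicit Defensive.
Import Order.TTheory GRing.Theory Num.Theory.
Local Open Scope ring_scope.

(* Binary vectors in {0,1}^n, coordinates indexed 0..n-1
   (paper coordinate k corresponds to index k-1). *)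
Definition bvec (n : nat) := {ffun 'I_n -> bool}.

Definition weight (m : nat) (x : {ffun 'I_m -> bool}) : nat :=
  (\sum_(i < m) (x i : nat))%N.

Definition dotb (n : nat) (x s : bvec n) : bool :=
  odd (\sum_(i < n) ((x i && s i) : nat))%N.

Definition fourier (R : numFieldType) (n : nat) (f : bvec n -> R) (s : bvec n) : R :=
  ((2 : R) ^+ n)^-1 * \sum_(x : bvec n) f x * (-1) ^+ (dotb x s).

Definition psum (n : nat) (x : bvec n) (r : nat) : int :=
  \sum_(i < n | (i < r)%N) (if x i then (-1)%R else 1%R).

Definition S2 (n : nat) (x : bvec n) : bool :=
  [forall r : 'I_n, (0 <= psum x r.+1) && (psum x r.+1 <= 2)].

Definition indS2 (R : numFieldType) (n : nat) (x : bvec n) : R := (S2 x)%:R.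

(* ceil(n/2), valid for n >= 1 *)
Definition ceilhalf (n : nat) : nat := (n.-1)./2.+1.

(* basis vector b_i (i = 0: 10^{n-1}; i >= 1: ones at paper coordinates 2i, 2i+1,
   i.e. indices 2i-1, 2i) *)
Definition bB (n : nat) (i : nat) : bvec n :=
  [ffun j : 'I_n => if i == 0%N then val j == 0%N
                    else (val j == (2 * i).-1)%N || (val j == 2 * i)%N].

Definition spanB (n : nat) (a : {ffun 'I_(ceilhalf n) -> bool}) : bvec n :=
  [ffun j : 'I_n => odd (\sum_(i < ceilhalf n) ((a i && bB n i j) : nat))%N].

Definition inVB (n : nat) (s : bvec n) : Prop :=
  exists a : {ffun 'I_(ceilhalf n) -> bool}, s = spanB a.

From HB Require Import structures.
From mathcomp Require Import all_boot all_order all_algebra.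
From mathcomp Require Import zify ring.
Import Order.TTheory GRing.Theory Num.Theory.
Local Open Scope ring_scope.

(* Write k = ceil(n/2) and let chi_s(x) = (-1)^(x.s) be the
   characters of F_2^n.
   1. Combinatorics: a word x lies in S_2 iff its running sums equal 1 at
      every odd length, i.e. iff x_1 = 0 and x_(2m) <> x_(2m+1) for every
      pair of paper coordinates; in terms of the basis B this says
      x.b_0 = 0 and x.b_i = 1 for 1 <= i < k.
   2. Hence 1_{S_2}(x) = prod_(i<k) (1 + sigma_i chi_(b_i)(x))/2 with
      sigma_0 = 1, sigma_i = -1 otherwise; expanding the product and using
      chi_u chi_v = chi_(u+v) gives
         1_{S_2} = 2^-k sum_(a in {0,1}^k) eps(a) chi_(s(a)),
      eps(a) = (-1)^(w(a)-a_0), s(a) = sum_i a_i b_i.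
   3. By orthogonality of characters, the Fourier transform of any such
      character expansion picks out the coefficients of the characters equal
      to chi_s.  Since a |-> s(a) is injective (s(a) has a_i at index 2i),
      the theorem follows: the coefficient at s(a) is 2^-k eps(a), and it is
      0 outside V_B = image of s.  Finally k = n - floor(n/2). *)

Section RunningSums.
Variable n : nat.
Implicit Types x : bvec n.

(* Coordinate r of x, read as false outside the range 0 <= r < n. *)
Definition bit x (r : nat) : bool := if insub r is Some i then x i else false.

Lemma bit_ord x (i : 'I_n) : bit x i = x i.
Proof. by rewrite /bit valK. Qed.

Lemma bit_out x r : (n <= r)%N -> bit x r = false.
Proof. by move=> h; rewrite /bit insubN // -leqNgt. Qed.

Lemma sum_select_bit x r :
  (\sum_(j < n) ((x j && (val j == r)) : nat))%N = bit x r.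
Proof.
case: (ltnP r n) => hr; last first.
  rewrite bit_out // big1 // => j _.
  by rewrite (ltn_eqF (leq_trans (ltn_ord j) hr)) andbF.
rewrite (bigD1 (Ordinal hr)) //= eqxx andbT -(bit_ord x (Ordinal hr)).
rewrite big1 ?addn0 // => j; rewrite -(inj_eq val_inj) /= => /negbTE ->.
by rewrite andbF.
Qed.

Definition step (b : bool) : int := if b then (-1)%R else 1%R.

Lemma psum0 x : psum x 0 = 0.
Proof. by rewrite /psum big_pred0 // => i; rewrite ltn0. Qed.

Lemma psumS x r : (r < n)%N -> psum x r.+1 = psum x r + step (bit x r).
Proof.
move=> hr; rewrite /psum (bigD1 (Ordinal hr)) //= addrC -(bit_ord x (Ordinal hr)).
congr (_ + _); apply: eq_bigl => i /=.
by rewrite -(inj_eq val_inj) /= ltnS leq_eqVlt; case: ltngtP.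
Qed.

Lemma psumSS x r : (r.+1 < n)%N ->
  psum x r.+2 = psum x r + step (bit x r) + step (bit x r.+1).
Proof. by move=> hr; rewrite psumS // psumS // ltnW. Qed.

Definition paired x : Prop :=
  ~~ bit x 0 /\ forall m, (2 * m + 2 < n)%N -> bit x (2 * m + 1) != bit x (2 * m + 2).

Lemma paired_psum_odd x : paired x ->
  forall m, (2 * m + 1 <= n)%N -> psum x (2 * m + 1) = 1.
Proof.
move=> [h0 hpair]; elim=> [|m IH] hm.
  by rewrite psumS ?psum0 ?(negbTE h0) //; lia.
have -> : (2 * m.+1 + 1 = (2 * m + 1).+2)%N by lia.
rewrite psumSS; last lia.
rewrite IH; last lia.
have -> : ((2 * m + 1).+1 = 2 * m + 2)%N by lia.
by move: (hpair m ltac:(lia)); case: (bit x _); case: (bit x _).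
Qed.

Lemma paired_S2 x : paired x -> S2 x.
Proof.
move=> hx; apply/forallP => r; have hr := ltn_ord r.
have := odd_double_half r; case: (odd r) => /= hodd.
- have -> : (r.+1 = (2 * r./2 + 1).+1)%N by lia.
  by rewrite psumS; [rewrite paired_psum_odd //; [case: (bit x _)|lia] | lia].
- have -> : (r.+1 = 2 * r./2 + 1)%N by lia.
  by rewrite paired_psum_odd //; lia.
Qed.

Lemma S2_bound x r : S2 x -> (r < n)%N -> 0 <= psum x r.+1 <= 2.
Proof. by move=> /forallP h hr; apply: (h (Ordinal hr)). Qed.

Lemma S2_psum_odd x : S2 x ->
  forall m, (2 * m + 1 <= n)%N -> psum x (2 * m + 1) = 1.
Proof.
move=> hS; elim=> [|m IH] hm.
  by move: (S2_bound x 0 hS ltac:(lia)); rewrite psumS ?psum0 //; case: (bit x 0).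
have -> : (2 * m.+1 + 1 = (2 * m + 1).+2)%N by lia.
move: (S2_bound x (2 * m + 1).+1 hS ltac:(lia)).
rewrite psumSS; last lia.
by rewrite IH; [case: (bit x _); case: (bit x _) | lia].
Qed.

Lemma S2_paired x : S2 x -> paired x.
Proof.
move=> hS; split.
  case: (ltnP 0 n) => hn; last by rewrite bit_out.
  by move: (S2_bound x 0 hS hn); rewrite psumS // psum0; case: (bit x 0).
move=> m hm; move: (S2_bound x (2 * m + 1).+1 hS ltac:(lia)).
rewrite psumSS; last lia.
rewrite (S2_psum_odd x hS); last lia.
have -> : ((2 * m + 1).+1 = 2 * m + 2)%N by lia.
by case: (bit x _); case: (bit x _).
Qed.

End RunningSums.

Arguments bit {n}.

Section Basis.
Variable n : nat.
Hypothesis n_gt0 : (0 < n)%N.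
Implicit Types x : bvec n.

Lemma ceilhalfE i : (i < ceilhalf n)%N = (2 * i < n)%N.
Proof. by rewrite /ceilhalf; apply/idP/idP; lia. Qed.

Lemma dotb_b0 x : dotb x (bB n 0) = bit x 0.
Proof.
rewrite /dotb; under eq_bigr => j _ do rewrite ffunE /=.
by rewrite sum_select_bit oddb.
Qed.

Lemma dotb_bS x i : dotb x (bB n i.+1) = bit x (2 * i + 1) (+) bit x (2 * i + 2).
Proof.
have sel2 (b : bool) (j : nat) : ((b && ((j == 2 * i + 1) || (j == 2 * i + 2))) : nat)
    = ((b && (j == 2 * i + 1)) + (b && (j == 2 * i + 2)))%N.
  case: b => //=; case: eqVneq => [->|_] /=; first by rewrite eqn_add2l.
  by case: (j == _).
have [odd_idx even_idx] : (2 * i.+1).-1 = (2 * i + 1)%N /\ (2 * i.+1 = 2 * i + 2)%N by lia.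
rewrite /dotb; under eq_bigr => j _ do rewrite ffunE odd_idx even_idx /= sel2.
by rewrite big_split /= !sum_select_bit oddD !oddb.
Qed.

Lemma S2_dotbE x :
  S2 x <-> forall i : 'I_(ceilhalf n), dotb x (bB n i) = (val i != 0%N).
Proof.
have pair_bound m : (m.+1 < ceilhalf n)%N = (2 * m + 2 < n)%N.
  by rewrite ceilhalfE; congr (_ < n)%N; lia.
split=> [/S2_paired [h0 hpair] [[|i] hi] | hdot].
- by rewrite dotb_b0 (negbTE h0).
- rewrite dotb_bS; move: (hpair i); rewrite -pair_bound => /(_ hi).
  by case: (bit x _); case: (bit x _).
apply: paired_S2; split; first by move: (hdot ord0); rewrite dotb_b0 => ->.
move=> m; rewrite -pair_bound => hm.
move: (hdot (Ordinal hm)); rewrite dotb_bS /=.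
by case: (bit x _); case: (bit x _).
Qed.

(* The coordinate 2i of s(a) is a_i: b_i is the only basis vector meeting it. *)
Lemma spanB_even (a : {ffun 'I_(ceilhalf n) -> bool}) (i : 'I_(ceilhalf n))
  (hi : (2 * i < n)%N) : spanB a (Ordinal hi) = a i.
Proof.
have bB_at (j : 'I_(ceilhalf n)) : bB n j (Ordinal hi) = (j == i).
  rewrite ffunE -(inj_eq val_inj) /=; case: j => [[|j] _] /=.
    by apply/idP/idP => /eqP h; apply/eqP; lia.
  by apply/idP/idP => [/orP [] /eqP h | /eqP h]; [lia | apply/eqP; lia | apply/orP; right; apply/eqP; lia].
rewrite ffunE; under eq_bigr => i' _ do rewrite bB_at.
rewrite (bigD1 i) //= eqxx andbT big1 ?addn0 ?oddb // => j /negbTE ->.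
by rewrite andbF.
Qed.

Lemma spanB_inj : injective (@spanB n).
Proof.
move=> a b eq_ab; apply/ffunP => i.
have hi : (2 * i < n)%N by rewrite -ceilhalfE.
by rewrite -(spanB_even a i hi) -(spanB_even b i hi) eq_ab.
Qed.

End Basis.

Arguments S2_dotbE {n}.
Arguments spanB_inj {n}.

Section Characters.
Variables (R : comPzRingType) (n : nat).
Implicit Types x s u : bvec n.

Definition chr s x : R := (-1) ^+ dotb x s.

Lemma chr_prod s x : chr s x = \prod_(j < n) (-1) ^+ (x j * s j)%N.
Proof.
by rewrite /chr /dotb signr_odd -prodrXr; apply: eq_bigr => j _; rewrite mulnb.
Qed.

(* sum_x chi_u(x) chi_s(x) = 2^n [u = s]: the sum factors over coordinates. *)
Lemma chr_orthogonal u s :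
  \sum_x chr u x * chr s x = if u == s then 2 ^+ n else 0.
Proof.
under eq_bigr => x _ do rewrite !chr_prod -big_split /=.
rewrite -(bigA_distr_bigA (fun j (b : bool) => (-1) ^+ (b * u j)%N * (-1) ^+ (b * s j)%N)) /=.
under eq_bigr => j _ do rewrite big_bool /=.
case: eqP => [<- | /ffunP u_neq_s].
  by rewrite (eq_bigr (fun=> 2)) ?prodr_const ?card_ord // => j _; case: (u j) => /=; ring.
have [j hj | no_diff] := pickP (fun j => u j != s j); last first.
  by case: u_neq_s => j; apply/eqP; move: (no_diff j) => /negbFE.
rewrite (bigD1 j) //= [X in X * _](_ : _ = 0) ?mul0r //.
by move: hj; case: (u j); case: (s j) => //= _; ring.
Qed.

Lemma chr_lincomb k (v : 'I_k -> bvec n) (a : {ffun 'I_k -> bool}) x :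
  \prod_(i < k) chr (v i) x ^+ a i
  = chr [ffun j => odd (\sum_(i < k) ((a i && v i j) : nat))%N] x.
Proof.
under eq_bigr => i _ do rewrite chr_prod -prodrXl.
rewrite exchange_big chr_prod; apply: eq_bigr => j _.
rewrite ffunE mulnC exprM signr_odd -exprM big_distrl /= expr_sum.
by apply: eq_bigr => i _; rewrite -exprM -mulnb; congr (_ ^+ _); ring.
Qed.

End Characters.

Arguments chr R {n}.

(* Fourier transform of a character expansion: f = sum_i c_i chi_(v_i) has
   hat f(s) = sum of the c_i with v_i = s.  This needs 2 invertible in R. *)
Lemma fourier_chr_expansion {R : numFieldType} {n} {I : finType} {c : I -> R}
    {v : I -> bvec n} {f : bvec n -> R} (s : bvec n) :
  (forall x, f x = \sum_i c i * chr R (v i) x) ->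
  fourier f s = \sum_(i | v i == s) c i.
Proof.
move=> f_exp; rewrite /fourier.
under eq_bigr => x _ do rewrite f_exp mulr_suml.
rewrite exchange_big /= [RHS]big_mkcond mulr_sumr; apply: eq_bigr => i _.
rewrite -[LHS]/(_ * \sum_x c i * chr R (v i) x * chr R s x).
under eq_bigr => x _ do rewrite -mulrA.
rewrite -mulr_sumr chr_orthogonal.
case: eqP => _; last by rewrite !mulr0.
by rewrite mulrCA mulVf ?mulr1 // expf_neq0 // pnatr_eq0.
Qed.

Section IndicatorExpansion.
Variables (R : numFieldType) (n : nat).
Hypothesis n_gt0 : (0 < n)%N.
Local Notation k := (ceilhalf n).

(* The prescribed sign sigma_i of chi_(b_i) on S_2: +1 for i = 0, else -1. *)
Definition sigmaB (i : 'I_k) : R := (-1) ^+ (val i != 0%N).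

(* eps(a) = prod_i sigma_i^(a_i), the coefficient of chi_(s(a)) up to 2^-k. *)
Definition epsB (a : {ffun 'I_k -> bool}) : R := \prod_(i < k) sigmaB i ^+ a i.

Lemma eqb_sign_avg (d e : bool) :
  ((d == e) : nat)%:R = (1 + (-1) ^+ e * (-1) ^+ d) / 2 :> R.
Proof.
have two_neq0 : (2 : R) != 0 by rewrite pnatr_eq0.
by case: d; case: e => /=; field.
Qed.

Lemma prod_avg_expand m (u : 'I_m -> R) :
  \prod_(i < m) ((1 + u i) / 2)
  = (2 ^+ m)^-1 * \sum_(a : {ffun 'I_m -> bool}) \prod_(i < m) u i ^+ a i.
Proof.
rewrite big_split /= prodr_const card_ord exprVn mulrC; congr (_ * _).
rewrite -(bigA_distr_bigA (fun i (b : bool) => u i ^+ b)) /=.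
by apply: eq_bigr => i _; rewrite big_bool /= expr1 expr0 addrC.
Qed.

(* 1_{S_2}(x) = prod_i [x.b_i = (i != 0)] = prod_i (1 + sigma_i chi_(b_i)(x))/2. *)
Lemma indS2_prod (x : bvec n) :
  indS2 R x = \prod_(i < k) ((1 + sigmaB i * chr R (bB n i) x) / 2).
Proof.
under eq_bigr => i _ do rewrite /chr /sigmaB -eqb_sign_avg.
rewrite /indS2; case hS: (S2 x).
  by rewrite big1 // => i _; rewrite (proj1 (S2_dotbE n_gt0 x) hS i) eqxx.
have [i hi | hdot] := pickP (fun i : 'I_k => dotb x (bB n i) != (val i != 0%N)).
  by rewrite (bigD1 i) //= (negbTE hi) mul0r.
suff : S2 x by rewrite hS.
by apply/(S2_dotbE n_gt0) => i; apply/eqP; move: (hdot i) => /negbFE.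
Qed.

Lemma indS2_chr_expansion (x : bvec n) :
  indS2 R x = \sum_(a : {ffun 'I_k -> bool}) (2 ^+ k)^-1 * epsB a * chr R (spanB a) x.
Proof.
rewrite indS2_prod prod_avg_expand mulr_sumr; apply: eq_bigr => a _.
rewrite -mulrA /epsB /spanB -chr_lincomb -big_split /=; congr (_ * _).
by apply: eq_bigr => i _; rewrite exprMn.
Qed.

Lemma epsB_weight (a : {ffun 'I_k -> bool}) : epsB a = (-1) ^+ (weight a - a ord0)%N.
Proof.
rewrite /epsB /sigmaB /weight; under eq_bigr => i _ do rewrite -exprM.
rewrite prodrXr big_ord_recl [in RHS]big_ord_recl /= add0n addKn.
by congr (_ ^+ _); apply: eq_bigr => i _; rewrite mul1n.
Qed.

End IndicatorExpansion.

Arguments indS2_chr_expansion {R n}.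

Theorem mainTheorem10 (R : numFieldType) (n : nat) (hn : (3 <= n)%N) :
  (forall a : {ffun 'I_(ceilhalf n) -> bool},
     fourier (@indS2 R n) (spanB a)
     = ((2 : R) ^+ (n - n./2))^-1 * (-1) ^+ (weight a - a ord0)%N)
  /\ (forall s : bvec n, ~ inVB s -> fourier (@indS2 R n) s = 0).
Proof.
have n_gt0 : (0 < n)%N by lia.
have fourier_indS2 s := fourier_chr_expansion s (indS2_chr_expansion n_gt0).
split=> [a | s s_notin_VB]; rewrite fourier_indS2.
- rewrite (big_pred1 a) => [|b]; last by rewrite /= (inj_eq (spanB_inj n_gt0)).
  have -> : (n - n./2 = ceilhalf n)%N by rewrite /ceilhalf; lia.
  by rewrite epsB_weight.
- rewrite big_pred0 // => a; apply/eqP => eq_s.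
  by apply: s_notin_VB; exists a.
Qed.
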